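(* Assume the setting in the context, with a decomposition of $\mathcal X$ over $A$, a cost function $g\in\mathcal G_s$ and a discount factor $\alpha\in(0,1)$. Then the family $\{(A,B|_{\mathcal E_i},g,\alpha)\}_{i\in\mathcal I}$ is a decomposition (in the sense of Definition 1) of $(A,B,g,\alpha)$ if and only if for every $x\in\mathcal X$ there exists an optimal policy at $x$ for $(A,B,g,\alpha)$ all of whose components lie in $\bigoplus_{i\in\mathcal I}\mathcal E_i$, i.e. $$\operatorname*{argmin}_{\pi\in\mathcal U^{\mathbb Z_+}}J(x,\pi)\;\cap\;\Big[\bigoplus_{i\in\mathcal I}\mathcal E_i\Big]^{\mathbb Z_+}\neq\emptyset\qquad\forall x\in\mathcal X.$$
   Context: Let $\mathcal F$ be a field and $\mathcal X,\mathcal U$ finite-dimensional vector spaces over $\mathcal F$. Let $A:\mathcal X\to\mathcal X$ and $B:\mathcal U\to\mathcal X$ be linear maps with $B$ injective, and consider the system $x_{t+1}=Ax_t+Bu_t$. Let $g:\mathcal X\to\mathbb R_{\ge 0}$ satisfy $g(x)=0\iff x=0$. Standing assumption: all minima appearing below are attained. Infinite-horizon problem $(A,B,g,\alpha)$, $\alpha\in(0,1)$: a policy $\pi$ assigns to each initial state $x_0$ an input sequence $\pi(x_0)=(\pi_t(x_0))_{t\in\mathbb Z_+}\in\mathcal U^{\mathbb Z_+}$; its cost is $J(x_0,\pi)=\sum_{t=0}^{\infty}\alpha^t g(x_t)$ with $x_{t+1}=Ax_t+B\pi_t(x_0)$. The optimal cost is $J^*(x_0)=\min_\pi J(x_0,\pi)$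 and a policy attaining it is optimal at $x_0$. A decomposition of $\mathcal X$ over $A$ is a direct sum $\mathcal X=\mathcal X_1\oplus\cdots\oplus\mathcal X_r$ with $r>1$ and $A\mathcal X_i\subseteq\mathcal X_i$ for all $i\in\mathcal I=\{1,\dots,r\}$. Write $\rho_i:\mathcal X\to\mathcal X_i$ for the projection onto $\mathcal X_i$ along the other summands. $\mathcal G_s$ is the set of functions $h:\mathcal X\to\mathbb R_{\ge0}$ with $h(x)=\sum_{i\in\mathcal I}h(\rho_i(x))$ for all $x$. Let $\mathcal E_i=\{u\in\mathcal U: Bu\in\mathcal X_i\}$. Subproblem $(A,B|_{\mathcal E_i},g,\alpha)$: the system $x_{i,t+1}=Ax_{i,t}+B\bar u_{i,t}$ with states in $\mathcal X_i$, inputs in $\mathcal E_i$, policies $\bar\pi_i(x_{i,0})\in\mathcal E_i^{\mathbb Z_+}$, cost $\bar J_i(x_{i,0},\bar\pi_i)=\sum_{t\ge0}\alpha^tg(x_{i,t})$, optimal cost $\bar J_i^*$ and optimal policies $\bar\pi_i^*$. Definition 1: the family $\{(A,B|_{\mathcal E_i},g,\alpha)\}_{i\in\mathcal I}$ is a decomposition of $(A,B,g,\alpha)$ if for every $x\in\mathcal X$: $J^*(x)=\sum_{i\in\mathcal I}\bar J_i^*(\rho_i(x))$, and for every choice of optimal policies $\bar\pi_i^*(\rho_i(x))$, $i\in\mathcal I$, there exists an optimal policy $\pi^*(x)$ of $(A,B,g,\alpha)$ with $\pi^*(x)=\sum_{i\in\mathcal I}\bar\pi_i^*(\rho_i(x))$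 (componentwise sum). *)

From Stdlib Require Import Reals ClassicalEpsilon.
From HB Require Import structures.
From mathcomp Require Import all_boot all_algebra.
Set Implicit Arguments. Unset Strict Implicit. Unset Printing Implicit Defensive.
Import GRing.Theory.
Local Open Scope ring_scope.

(* Extended nonnegative reals [0, +oo]: [Some v] is finite, [None] is +oo. *)
Definition ereal := option R.

Definition eadd (a b : ereal) : ereal :=
  match a, b with Some x, Some y => Some (Rplus x y) | _, _ => None end.

Definition ele (a b : ereal) : Prop :=
  match a, b with
  | _, None => True
  | None, Some _ => False
  | Some x, Some y => Rle x y
  end.

(* Value in [0,+oo] of the series sum_{t>=0} s t (for s >= 0): the supremum
   of its partial sums, +oo if these are unbounded. *)
Definition series_val (s : nat -> R) : ereal :=
  let E := fun y => exists n, y = sum_f_R0 s n in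
  match excluded_middle_informative (bound E) with
  | left Hb =>
      Some (proj1_sig (completeness E Hb (ex_intro _ (sum_f_R0 s 0)
                                           (ex_intro _ 0%nat erefl))))
  | right _ => None
  end.

Section System.
Variables (F : fieldType) (X U : vectType F).

Fixpoint traj (A : 'End(X)) (B : 'Hom(U, X)) (x0 : X) (u : nat -> U) (t : nat)
  : X :=
  match t with
  | 0 => x0
  | t'.+1 => (A (traj A B x0 u t') + B (u t'))%R
  end.

Definition cost (A : 'End(X)) (B : 'Hom(U, X)) (g : X -> R) (alpha : R)
  (x0 : X) (u : nat -> U) : ereal :=
  series_val (fun t => Rmult (pow alpha t) (g (traj A B x0 u t))).

Definition optimal_in (E : {vspace U}) A B g alpha (x0 : X) (u : nat -> U) :=
  (forall t, u t \in E) /\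
  forall u', (forall t, u' t \in E) -> ele (cost A B g alpha x0 u) (cost A B g alpha x0 u').

(* Optimal value (minimum, assumed attained) over admissible sequences. *)
Definition opt_value (E : {vspace U}) A B g alpha (x0 : X) : ereal :=
  epsilon (inhabits None)
    (fun v => exists u, optimal_in E A B g alpha x0 u /\ cost A B g alpha x0 u = v).

End System.

From Stdlib Require Import Reals ClassicalEpsilon Lra FunctionalExtensionality.
From HB Require Import structures.
From mathcomp Require Import all_boot all_algebra.
Set Implicit Arguments. Unset Strict Implicit. Unset Printing Implicit Defensive.

(* Inputs whose components lie in the E_i = B^-1(X_i) drive each invariant
   summand X_i separately, so the trajectory from x splits into the
   trajectories of the subproblems from rho_i x, and since g is separable the
   discounted cost splits into the sum of the subproblem costs.  Hence a sum of
   subproblem optima costs sum_i J_i^*(rho_i x), which is no more than the cost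
   of any policy with values in (+)_i E_i.  If some optimal policy has values
   there, the sum of subproblem optima is optimal too and both halves of
   Definition 1 follow; conversely, Definition 1 itself exhibits such a policy. *)

Lemma Rplus_assocC : associative Rplus.
Proof. by move=> x y z; rewrite Rplus_assoc. Qed.
HB.instance Definition _ :=
  Monoid.isComLaw.Build R R0 Rplus Rplus_assocC Rplus_comm Rplus_0_l.

Lemma eadd_assoc : associative eadd.
Proof. by move=> [x|] [y|] [z|] //=; rewrite Rplus_assoc. Qed.
Lemma eadd_comm : commutative eadd.
Proof. by move=> [x|] [y|] //=; rewrite Rplus_comm. Qed.
Lemma eadd_0l : left_id (Some R0) eadd.
Proof. by move=> [x|] //=; rewrite Rplus_0_l. Qed.
HB.instance Definition _ :=
  Monoid.isComLaw.Build ereal (Some R0) eadd eadd_assoc eadd_comm eadd_0l.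

Section ExtendedOrder.
Local Open Scope R_scope.

Lemma ele_refl a : ele a a.
Proof. by case: a => [x|] //=; lra. Qed.

Lemma ele_trans a b c : ele a b -> ele b c -> ele a c.
Proof. by case: a => [x|]; case: b => [y|]; case: c => [z|] //=; lra. Qed.

Lemma ele_anti a b : ele a b -> ele b a -> a = b.
Proof. by case: a => [x|]; case: b => [y|] //= H1 H2; congr Some; lra. Qed.

Lemma ele_sum n (a b : 'I_n -> ereal) : (forall i, ele (a i) (b i)) ->
  ele (\big[eadd/Some R0]_(i < n) a i) (\big[eadd/Some R0]_(i < n) b i).
Proof.
move=> le_ab; apply: (big_ind2 ele) => //; first exact: ele_refl.
by move=> [x|] [y|] [z|] [w|] //=; lra.
Qed.

End ExtendedOrder.

Section Series.
Local Open Scope R_scope.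

Definition partial_sums (s : nat -> R) := fun y => exists n, y = sum_f_R0 s n.

Lemma series_val_lub s a : is_lub (partial_sums s) a -> series_val s = Some a.
Proof.
move=> lub_a; rewrite /series_val; case: excluded_middle_informative => [bnd|nbnd].
  congr Some; case: completeness => b lub_b /=.
  by apply: Rle_antisym; [apply: (proj2 lub_b); apply lub_a
                         | apply: (proj2 lub_a); apply lub_b].
by case: nbnd; exists a; apply lub_a.
Qed.

Lemma series_val_unbounded s : ~ bound (partial_sums s) -> series_val s = None.
Proof. by rewrite /series_val; case: excluded_middle_informative. Qed.

Lemma partial_sums_lub s : bound (partial_sums s) -> exists a, is_lub (partial_sums s) a.
Proof.
move=> bnd; case: (completeness (partial_sums s) bnd) => [|a lub_a]; last by exists a.
by exists (sum_f_R0 s 0), 0%nat.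
Qed.

Section Nonneg.
Variable s : nat -> R.
Hypothesis s_ge0 : forall t, 0 <= s t.

Lemma sum_f_R0_ge0 n : 0 <= sum_f_R0 s n.
Proof. elim: n => [|n IH] /=; first exact: s_ge0. have := s_ge0 n.+1; lra. Qed.

Lemma sum_f_R0_mono n m : (n <= m)%nat -> sum_f_R0 s n <= sum_f_R0 s m.
Proof.
move=> /subnK <-; elim: (m - n)%nat => [|k IH]; first by rewrite add0n; lra.
rewrite addSn /=; have := s_ge0 (k + n).+1; lra.
Qed.

End Nonneg.

Lemma lub_partial_sumsD f h a b :
  (forall t, 0 <= f t) -> (forall t, 0 <= h t) ->
  is_lub (partial_sums f) a -> is_lub (partial_sums h) b ->
  is_lub (partial_sums (fun t => f t + h t)) (a + b).
Proof.
move=> f_ge0 h_ge0 lub_a lub_b.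
have sumD n : sum_f_R0 (fun t => f t + h t) n = sum_f_R0 f n + sum_f_R0 h n.
  exact: sum_plus.
split=> [y [n ->]|M ubM].
  rewrite sumD; have := proj1 lub_a _ (ex_intro _ n erefl).
  have := proj1 lub_b _ (ex_intro _ n erefl); lra.
(* two partial sums are dominated by the one at the larger index *)
have le_M n m : sum_f_R0 f n + sum_f_R0 h m <= M.
  have := ubM _ (ex_intro _ (maxn n m) erefl); rewrite sumD.
  have := sum_f_R0_mono f_ge0 (leq_maxl n m).
  have := sum_f_R0_mono h_ge0 (leq_maxr n m); lra.
have le_Ma m : sum_f_R0 h m <= M - a.
  suff : a <= M - sum_f_R0 h m by lra.
  by apply: (proj2 lub_a) => y [n ->]; have := le_M n m; lra.
suff : b <= M - a by lra.
by apply: (proj2 lub_b) => y [m ->]; apply: le_Ma.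
Qed.

Lemma series_valD f h : (forall t, 0 <= f t) -> (forall t, 0 <= h t) ->
  series_val (fun t => f t + h t) = eadd (series_val f) (series_val h).
Proof.
move=> f_ge0 h_ge0.
have unbounded_sum s1 s2 : (forall t, 0 <= s2 t) -> ~ bound (partial_sums s1) ->
    forall s, (forall n, sum_f_R0 s n = sum_f_R0 s1 n + sum_f_R0 s2 n) ->
    series_val s = None.
  move=> s2_ge0 nbnd s sumD; apply: series_val_unbounded => -[M ubM].
  apply: nbnd; exists M => y [n ->]; have := ubM _ (ex_intro _ n erefl).
  rewrite sumD; have := sum_f_R0_ge0 s2_ge0 n; lra.
have [bf|nbf] := classic (bound (partial_sums f)); last first.
  by rewrite (series_val_unbounded nbf) (unbounded_sum f h) // => n; apply: sum_plus.
have [bh|nbh] := classic (bound (partial_sums h)); last first.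
  rewrite (series_val_unbounded nbh) (unbounded_sum h f) //; first by case: series_val.
  by move=> n; rewrite sum_plus Rplus_comm.
have [a lub_a] := partial_sums_lub bf; have [b lub_b] := partial_sums_lub bh.
rewrite (series_val_lub lub_a) (series_val_lub lub_b).
exact/series_val_lub/lub_partial_sumsD.
Qed.

Lemma series_val0 : series_val (fun _ => 0) = Some 0.
Proof.
have sum0 n : sum_f_R0 (fun _ => 0) n = 0 by elim: n => [|n IH] //=; rewrite IH; lra.
apply: series_val_lub; split=> [y [n ->]|M ubM]; first by rewrite sum0; lra.
by have := ubM _ (ex_intro _ 0%nat erefl); rewrite sum0.
Qed.

Lemma series_val_sum n (f : 'I_n -> nat -> R) : (forall i t, 0 <= f i t) ->
  series_val (fun t => \big[Rplus/R0]_(i < n) f i t) =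
  \big[eadd/Some R0]_(i < n) series_val (f i).
Proof.
elim: n f => [|n IH] f f_ge0.
  rewrite big_ord0 -series_val0; congr series_val.
  by apply: functional_extensionality => t; rewrite big_ord0.
rewrite big_ord_recr /= -IH => [|i t]; last exact: f_ge0.
rewrite -series_valD // => [|t]; last first.
  by apply: (big_ind (fun x => 0 <= x)) => //; [lra | move=> x y; lra].
by congr series_val; apply: functional_extensionality => t; rewrite big_ord_recr.
Qed.

End Series.

Lemma opt_value_optimal (F : fieldType) (X U : vectType F) (E : {vspace U})
  A B g alpha (x : X) (u : nat -> U) :
  optimal_in E A B g alpha x u -> opt_value E A B g alpha x = cost A B g alpha x u.
Proof.
move=> [uE u_opt]; rewrite /opt_value.
have attained : exists v, exists u, optimal_in E A B g alpha x u /\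
    cost A B g alpha x u = v by exists (cost A B g alpha x u), u.
have [u' [[u'E u'_opt] <-]] := epsilon_spec (inhabits None) _ attained.
by apply: ele_anti; [exact: u'_opt | exact: u_opt].
Qed.

Section Decomposition.
Import GRing.Theory.
Local Open Scope ring_scope.
Variables (F : fieldType) (X U : vectType F) (A : 'End(X)) (B : 'Hom(U, X)).
Variables (r : nat) (Xs : 'I_r -> {vspace X}).
Hypothesis Xs_direct : directv (\sum_(i < r) Xs i)%VS.
Hypothesis Xs_full : (\sum_(i < r) Xs i)%VS = fullv.
Hypothesis Xs_inv : forall i, (A @: Xs i <= Xs i)%VS.
Variables (g : X -> R) (alpha : R).
Hypothesis g_nonneg : forall x, Rle R0 (g x).
Hypothesis g_sep : forall x, g x =
  \big[Rplus/R0]_(i < r) g (sumv_pi_for (erefl (\sum_(j < r) Xs j)%VS) i x).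
Hypothesis alpha_pos : Rlt R0 alpha.

Notation rho := (sumv_pi_for (erefl (\sum_(j < r) Xs j)%VS)).
Notation Es i := (B @^-1: Xs i)%VS.

Lemma sum_rho (x : X) : \sum_(i < r) rho i x = x.
Proof. by apply: sumv_pi_sum; rewrite Xs_full memvf. Qed.

Lemma rho_sum (y : 'I_r -> X) : (forall i, y i \in Xs i) ->
  forall j, rho j (\sum_(i < r) y i) = y j.
Proof.
move=> yXs j.
have := directv_sum_unique Xs_direct (fun i => rho i (\sum_(i < r) y i)) y.
rewrite sum_rho eqxx => /(_ (fun i _ => memv_sum_pi _ _ _) (fun i _ => yXs i)).
by move/esym/forall_inP/(_ j isT)/eqP.
Qed.

Lemma traj_mem i x0 (v : nat -> U) : x0 \in Xs i -> (forall t, v t \in Es i) ->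
  forall t, traj A B x0 v t \in Xs i.
Proof.
move=> x0Xs vEs; elim=> [|t IH] //=; apply: memvD.
  exact: subvP (Xs_inv i) _ (memv_img A IH).
by rewrite memv_preim.
Qed.

Lemma traj_sum x (v : 'I_r -> nat -> U) t :
  traj A B x (fun t => \sum_(i < r) v i t) t =
  \sum_(i < r) traj A B (rho i x) (v i) t.
Proof.
elim: t => [|t IH] /=; first by rewrite sum_rho.
by rewrite IH !linear_sum -big_split.
Qed.

Lemma cost_sum x (v : 'I_r -> nat -> U) : (forall i t, v i t \in Es i) ->
  cost A B g alpha x (fun t => \sum_(i < r) v i t) =
  \big[eadd/Some R0]_(i < r) cost A B g alpha (rho i x) (v i).
Proof.
move=> vEs; rewrite /cost -series_val_sum => [|i t]; last first.
  by apply: Rmult_le_pos; [exact/pow_le/Rlt_le | exact: g_nonneg].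
congr series_val; apply: functional_extensionality => t.
rewrite -(big_endo (Rmult _) (Rmult_plus_distr_l _) (Rmult_0_r _)).
rewrite traj_sum g_sep; congr Rmult; apply: eq_bigr => j _.
by rewrite rho_sum // => i; apply: traj_mem => //; exact: memv_sum_pi.
Qed.

Lemma policy_components (u : nat -> U) :
  (forall t, u t \in (\sum_(i < r) Es i)%VS) ->
  exists w : nat -> 'I_r -> U,
    (forall t i, w t i \in Es i) /\ u = fun t => \sum_(i < r) w t i.
Proof.
move=> uEs; have [w wP] : exists w : nat -> 'I_r -> U, forall t,
    (forall i, w t i \in Es i) /\ u t = \sum_(i < r) w t i.
  apply: (choice (fun t (wt : 'I_r -> U) =>
    (forall i, wt i \in Es i) /\ u t = \sum_(i < r) wt i)) => t.
  have /memv_sumP[wt wtEs ->] := uEs t.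
  by exists wt; split=> // i; exact: wtEs.
exists w; split=> [t|]; first exact: (wP t).1.
by apply: functional_extensionality => t; exact: (wP t).2.
Qed.

Lemma sum_sub_optimal_optimal x (u : nat -> U) (ubar : 'I_r -> nat -> U) :
  optimal_in fullv A B g alpha x u ->
  (forall t, u t \in (\sum_(i < r) Es i)%VS) ->
  (forall i, optimal_in (Es i) A B g alpha (rho i x) (ubar i)) ->
  optimal_in fullv A B g alpha x (fun t => \sum_(i < r) ubar i t).
Proof.
move=> [_ u_opt] uEs ubar_opt; split=> [t|u' _]; first exact: memvf.
apply: ele_trans (u_opt u' (fun t => memvf _)).
have [w [wEs ->]] := policy_components uEs.
rewrite !cost_sum => [||i t]; last exact: (ubar_opt i).1.
- by apply: ele_sum => i; apply: (ubar_opt i).2 => t; exact: wEs.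
- by move=> i t; exact: wEs.
Qed.

End Decomposition.

Theorem lemma2 (F : fieldType) (X U : vectType F)
  (A : 'End(X)) (B : 'Hom(U, X))
  (B_inj : lker B = 0%VS)
  (r : nat) (r_gt1 : (1 < r)%N) (Xs : 'I_r -> {vspace X})
  (Xs_direct : directv (\sum_(i < r) Xs i)%VS)
  (Xs_full : (\sum_(i < r) Xs i)%VS = fullv)
  (Xs_inv : forall i, (A @: Xs i <= Xs i)%VS)
  (g : X -> R) (g_nonneg : forall x, Rle R0 (g x))
  (g_zero : forall x, g x = R0 <-> x = 0%R)
  (g_sep : forall x, g x =
     \big[Rplus/R0]_(i < r) g (sumv_pi_for (erefl (\sum_(j < r) Xs j)%VS) i x))
  (alpha : R) (alpha_pos : Rlt R0 alpha) (alpha_lt1 : Rlt alpha R1)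
  (att_full : forall x : X, exists u, optimal_in fullv A B g alpha x u)
  (att_sub : forall (i : 'I_r) (x : X), x \in Xs i ->
     exists u, optimal_in (B @^-1: Xs i)%VS A B g alpha x u) :
  let rho := sumv_pi_for (erefl (\sum_(j < r) Xs j)%VS) in
  let E := fun i : 'I_r => (B @^-1: Xs i)%VS in
  ( (forall x : X,
       opt_value fullv A B g alpha x =
       \big[eadd/Some R0]_(i < r) opt_value (E i) A B g alpha (rho i x))
    /\
    (forall (x : X) (ubar : 'I_r -> nat -> U),
       (forall i, optimal_in (E i) A B g alpha (rho i x) (ubar i)) ->
       optimal_in fullv A B g alpha x (fun t => (\sum_(i < r) ubar i t)%R)) )
  <->
  (forall x : X, exists u, optimal_in fullv A B g alpha x u /\
     (forall t, u t \in (\sum_(i < r) E i)%VS)).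
Proof.
move=> rho E.
have sub_optimal x : exists ubar : 'I_r -> nat -> U,
    forall i, optimal_in (E i) A B g alpha (rho i x) (ubar i).
  apply: (@fin_all_exists _ (fun=> nat -> U) (fun i ui =>
    optimal_in (E i) A B g alpha (rho i x) ui)) => i.
  by apply: att_sub; exact: memv_sum_pi.
split=> [[_ sum_optimal] x | has_optimal].
  have [ubar ubar_opt] := sub_optimal x.
  exists (fun t => (\sum_(i < r) ubar i t)%R); split; first exact: sum_optimal.
  by move=> t; apply: memv_sumr => i _; exact: (ubar_opt i).1.
have sum_optimal x ubar : (forall i, optimal_in (E i) A B g alpha (rho i x) (ubar i)) ->
    optimal_in fullv A B g alpha x (fun t => (\sum_(i < r) ubar i t)%R).
  have [u [u_opt uE]] := has_optimal x.
  exact: (sum_sub_optimal_optimal Xs_direct Xs_full Xs_inv g_nonneg g_sep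
            alpha_pos u_opt uE).
split=> // x; have [ubar ubar_opt] := sub_optimal x.
rewrite (opt_value_optimal (sum_optimal x ubar ubar_opt)).
rewrite (cost_sum Xs_direct Xs_full Xs_inv g_nonneg g_sep alpha_pos).
  by apply: eq_bigr => i _; rewrite (opt_value_optimal (ubar_opt i)).
by move=> i; exact: (ubar_opt i).1.
Qed.
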